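(* Let $k$ be a positive integer and let $G$ be a finite, simple, undirected, connected graph of order $n\ge 2$. (a) If $O_{R,k}(G)=\mathcal{M}$, then $\dim_k(G)\le\lfloor n/2\rfloor$. (b) If $\dim_k(G)\ge\lceil n/2\rceil+1$, then $O_{R,k}(G)=\mathcal{B}$.
   Context: $d(x,y)$ is the shortest-path distance and $d_k(x,y)=\min\{d(x,y),k+1\}$. A set $S\subseteq V(G)$ is a distance-$k$ resolving set if for all distinct $x,y\in V(G)$ some $z\in S$ has $d_k(x,z)\ne d_k(y,z)$; $\dim_k(G)$ is the minimum cardinality of a distance-$k$ resolving set. In the Maker-Breaker distance-$k$ resolving game on $G$, Maker and Breaker alternately select a not-yet-chosen vertex; Maker wins if his selected vertices form a distance-$k$ resolving set, Breaker wins otherwise. $O_{R,k}(G)=\mathcal{M}$ if Maker has a winning strategy whether he moves first or second, $\mathcal{B}$ if Breaker has a winning strategy whether she moves first or second, and $\mathcal{N}$ if the first player has a winning strategy. *)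

From mathcomp Require Import all_boot.
Set Implicit Arguments. Unset Strict Implicit. Unset Printing Implicit Defensive.

Section Game.
Variables (T : finType) (e : rel T).

Definition walk_len (n : nat) (x y : T) : bool :=
  [exists p : n.-tuple T, path e x p && (last x p == y)].

(* shortest-path distance: least n with a walk of length n from x to y
   (for a connected graph this is < #|T|; otherwise the value #|T| is a dummy) *)
Definition gdist (x y : T) : nat :=
  find (fun n => walk_len n x y) (iota 0 #|T|).

Definition dk (k : nat) (x y : T) : nat := minn (gdist x y) k.+1.

Definition resolving (k : nat) (S : {set T}) : bool :=
  [forall x, forall y, (x != y) ==> [exists z in S, dk k x z != dk k y z]].

(* dim_k(G): minimum cardinality of a distance-k resolving set
   (V(G) itself is always resolving, so the minimum is <= #|T|) *)
Definition dimk (k : nat) : nat :=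
  find (fun m => [exists S : {set T}, resolving k S && (#|S| == m)]) (iota 0 #|T|.+1).

Definition freev (M B : {set T}) : {set T} := ~: (M :|: B).

(* Maker (with current set M, Breaker's set B) has a winning strategy,
   when it is Maker's turn iff mturn; n is fuel (>= number of free vertices). *)
Fixpoint makerWins (k n : nat) (M B : {set T}) (mturn : bool) : bool :=
  match n with
  | 0 => resolving k M
  | n'.+1 =>
    if freev M B == set0 then resolving k M
    else if mturn then [exists v in freev M B, makerWins k n' (v |: M) B false]
    else [forall v in freev M B, makerWins k n' M (v |: B) true]
  end.

Fixpoint breakerWins (k n : nat) (M B : {set T}) (mturn : bool) : bool :=
  match n with
  | 0 => ~~ resolving k M
  | n'.+1 =>
    if freev M B == set0 then ~~ resolving k M
    else if mturn then [forall v in freev M B, breakerWins k n' (v |: M) B false]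
    else [exists v in freev M B, breakerWins k n' M (v |: B) true]
  end.

Definition maker_first_wins k := makerWins k #|T| set0 set0 true.
Definition maker_second_wins k := makerWins k #|T| set0 set0 false.
Definition breaker_first_wins k := breakerWins k #|T| set0 set0 false.
Definition breaker_second_wins k := breakerWins k #|T| set0 set0 true.

End Game.

Inductive outcome := OutM | OutB | OutN.

Definition outcomeRk (T : finType) (e : rel T) (k : nat) : outcome :=
  if maker_first_wins e k && maker_second_wins e k then OutM
  else if breaker_first_wins e k && breaker_second_wins e k then OutB
  else OutN.

Definition connected_graph (T : finType) (e : rel T) : Prop :=
  forall x y : T, connect e x y.

From mathcomp Require Import all_boot.

(* Whatever both players do, Maker ends a game with f free vertices holding at
   most ⌈f/2⌉ of them if he moves first and ⌊f/2⌋ if he moves second.  So a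
   Maker win yields a resolving set of that size, which gives (a) from the game
   where Maker moves second.  If dim_k exceeds ⌈n/2⌉, Maker wins in neither
   game, and since the finite game is determined, Breaker wins both: this is
   (b).  Neither part uses k > 0 or any property of the graph. *)

Definition maker_share (mturn : bool) (f : nat) : nat :=
  if mturn then uphalf f else f./2.

Lemma maker_shareS (mturn : bool) (f : nat) :
  maker_share mturn f.+1 = mturn + maker_share (~~ mturn) f.
Proof. by case: mturn. Qed.

Lemma maker_share_le_uphalf (mturn : bool) (f : nat) :
  maker_share mturn f <= uphalf f.
Proof. by case: mturn; rewrite //= uphalf_half leq_addl. Qed.

Section Game.
Set Implicit Arguments.
Variables (T : finType) (e : rel T) (k : nat).

Lemma dimk_le_card (S : {set T}) : resolving e k S -> dimk e k <= #|S|.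
Proof.
move=> resS; rewrite /dimk; set P := (fun m => _).
have PS : P #|S| by apply/existsP; exists S; rewrite resS eqxx.
have S_in_range : #|S| < #|T|.+1 by rewrite ltnS max_card.
by rewrite leqNgt; apply/negP => /(before_find 0); rewrite nth_iota // add0n PS.
Qed.

Lemma freev_addM (v : T) (M B : {set T}) : freev (v |: M) B = freev M B :\ v.
Proof. by apply/setP => x; rewrite !inE -orbA negb_or. Qed.

Lemma freev_addB (v : T) (M B : {set T}) : freev M (v |: B) = freev M B :\ v.
Proof. by apply/setP => x; rewrite !inE orbCA negb_or. Qed.

Lemma card_freev_pick (v : T) (M B : {set T}) :
  v \in freev M B -> #|freev M B| = #|freev M B :\ v|.+1.
Proof. by move=> v_free; rewrite (cardsD1 v) v_free. Qed.

Lemma breakerWinsE (n : nat) (M B : {set T}) (mturn : bool) :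
  breakerWins e k n M B mturn = ~~ makerWins e k n M B mturn.
Proof.
elim: n M B mturn => [|n IHn] M B [] //=; case: ifP => // _.
- by rewrite negb_exists_in; apply: eq_forallb => v; rewrite IHn.
- by rewrite negb_forall_in; apply: eq_existsb => v; rewrite IHn.
Qed.

Lemma makerWins_resolving (n : nat) (M B : {set T}) (mturn : bool) :
  #|freev M B| <= n -> makerWins e k n M B mturn ->
  exists2 S : {set T}, resolving e k S &
    #|S| <= #|M| + maker_share mturn #|freev M B|.
Proof.
elim: n M B mturn => [|n IHn] M B mturn free_le /=.
  by move=> resM; exists M; rewrite ?leq_addr.
case: ifP => [_ resM|/negbT/set0Pn[v0 v0_free]].
  by exists M; rewrite ?leq_addr.
case: mturn.
- case/exists_inP => v v_free win.
  have v_notin_M : v \notin M by move: v_free; rewrite !inE negb_or => /andP[].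
  have [|S resS leS] := IHn _ _ _ _ win.
    by move: free_le; rewrite freev_addM (card_freev_pick v_free).
  exists S => //; move: leS.
  rewrite freev_addM cardsU1 v_notin_M (card_freev_pick v_free) maker_shareS.
  by rewrite addnCA addnA.
- move/forall_inP => win_all; have win := win_all _ v0_free.
  have [|S resS leS] := IHn _ _ _ _ win.
    by move: free_le; rewrite freev_addB (card_freev_pick v0_free).
  by exists S; rewrite // (card_freev_pick v0_free) maker_shareS -freev_addB.
Qed.

Lemma makerWins_start_dimk (mturn : bool) :
  makerWins e k #|T| set0 set0 mturn -> dimk e k <= maker_share mturn #|T|.
Proof.
have free0 : freev set0 set0 = [set: T] by apply/setP => x; rewrite !inE.
move/makerWins_resolving; rewrite free0 cardsT cards0.
by case=> // S /dimk_le_card; apply: leq_trans.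
Qed.

End Game.

Theorem mainTheorem5 (T : finType) (e : rel T) (k : nat) :
  0 < k -> symmetric e -> irreflexive e -> connected_graph e -> 2 <= #|T| ->
  (outcomeRk e k = OutM -> dimk e k <= #|T| %/ 2) /\
  ((#|T|.+1) %/ 2 + 1 <= dimk e k -> outcomeRk e k = OutB).
Proof.
move=> _ _ _ _ _; rewrite /outcomeRk /maker_first_wins /maker_second_wins.
rewrite /breaker_first_wins /breaker_second_wins !breakerWinsE; split.
  case: ifP => [/andP[_ maker_second] _|_]; last by case: ifP.
  by rewrite divn2; apply: makerWins_start_dimk maker_second.
rewrite divn2 -uphalfE addn1 => dimk_gt.
have maker_loses mturn : ~~ makerWins e k #|T| set0 set0 mturn.
  apply/negP => /makerWins_start_dimk.
  by rewrite leqNgt (leq_ltn_trans (maker_share_le_uphalf _ _) dimk_gt).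
by rewrite !(negbTE (maker_loses _)).
Qed.
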